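(* Let $4/3\le p\le\sqrt2$, and put $$u=\frac{6p^2}{4-p^2},\quad v=2,\quad a=\frac{3p^3}{4-p^2},\quad b=\frac{5p}{2},\quad c=\frac p2.$$ Define $F(z)=|u+vz|-|a+bz-cz^2|$. Then $F(z)\le F(-|z|)$ for all $z$ with $|z|\le1$. *)

(* complex numbers as an arbitrary numClosedFieldType C
   (algebraically closed field with conjugation, norm `|.|, e.g. the complex numbers). *)
From HB Require Import structures.
From mathcomp Require Import all_boot all_order all_algebra.
Set Implicit Arguments. Unset Strict Implicit. Unset Printing Implicit Defensive.
Import Order.TTheory GRing.Theory Num.Theory.
Local Open Scope ring_scope.

Section Lemma8Defs.
Variable C : numClosedFieldType.

Definition u8 (p : C) : C := 6 * p ^+ 2 / (4 - p ^+ 2).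
Definition v8 : C := 2.
Definition a8 (p : C) : C := 3 * p ^+ 3 / (4 - p ^+ 2).
Definition b8 (p : C) : C := 5 * p / 2.
Definition c8 (p : C) : C := p / 2.

Definition F8 (p z : C) : C :=
  `|u8 p + v8 * z| - `|a8 p + b8 p * z - c8 p * z ^+ 2|.
End Lemma8Defs.

(* Write r = |z|, x = Re z and note a = p u / 2. Both |u + 2z|^2 and
   |a + b z - c z^2|^2 are polynomials in r and x; at fixed r they exceed
   their values at z = -r by 4u (x + r) and by (x + r) q, with
   q >= 5p (a - c r^2). Setting A = u - 2r and B = |a - b r - c r^2|, the claim
   |u + 2z| - A <= |a + b z - c z^2| - B then follows by comparing squares
   once 4u (|u + 2z| - A + 2B) <= q (|u + 2z| + A). This is affine in
   |u + 2z|, which ranges over [u - 2r, u + 2r], so it reduces to two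
   polynomial inequalities in p, r, u, valid because 24/5 <= u <= 6 on
   4/3 <= p <= sqrt 2. *)

From HB Require Import structures.
From mathcomp Require Import all_boot all_order all_algebra.
From mathcomp Require Import ring lra.
Import Order.TTheory GRing.Theory Num.Theory.
Local Open Scope ring_scope.

Section RealInequalities.
Context {R : realFieldType}.

Lemma affine_ge0_between {k l lo hi t : R} :
  lo <= t -> t <= hi -> 0 <= k * lo + l -> 0 <= k * hi + l -> 0 <= k * t + l.
Proof.
move=> lo_t t_hi; have [k_ge0 | k_lt0] := lerP 0 k.
  by move=> lo_ge0 _; apply: le_trans lo_ge0 _; rewrite lerD2r ler_wpM2l.
by move=> _ hi_ge0; apply: le_trans hi_ge0 _; rewrite lerD2r ler_wnM2l // ltW.
Qed.

Lemma sub_le_of_sqr_increments (A B n1 n2 t k q : R) :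
  0 < A -> 0 <= B -> 0 <= n2 -> 0 <= t -> A <= n1 ->
  n1 ^+ 2 - A ^+ 2 = k * t -> n2 ^+ 2 - B ^+ 2 = q * t ->
  k * (n1 - A + 2 * B) <= q * (n1 + A) ->
  n1 - n2 <= A - B.
Proof.
move=> A_gt0 B_ge0 n2_ge0 t_ge0 A_le_n1 e1 e2 slopes.
have n1A_gt0 : 0 < n1 + A by lra.
have growth : (n1 - A) * (n1 - A + 2 * B) <= q * t.
  rewrite -(ler_pM2l n1A_gt0) -subr_ge0.
  have -> : (n1 + A) * (q * t) - (n1 + A) * ((n1 - A) * (n1 - A + 2 * B))
      = t * (q * (n1 + A) - k * (n1 - A + 2 * B)).
    have -> : (n1 + A) * ((n1 - A) * (n1 - A + 2 * B))
        = (n1 ^+ 2 - A ^+ 2) * (n1 - A + 2 * B) by ring.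
    by rewrite e1; ring.
  by rewrite mulr_ge0 // subr_ge0.
suff : (B + (n1 - A)) ^+ 2 <= n2 ^+ 2 by rewrite ler_sqr ?nnegrE; lra.
have -> : (B + (n1 - A)) ^+ 2 = B ^+ 2 + (n1 - A) * (n1 - A + 2 * B) by ring.
lra.
Qed.

End RealInequalities.

(* [lra] and [nra] need a [realFieldType]: the real elements of [C] form one,
   whose operations and order reduce by conversion to those of [C]. *)
Section RealSubfield.
Variable C : numClosedFieldType.

Record real_of := RealOf { real_val : C; real_valP : real_val \is Num.real }.

HB.instance Definition _ := [isSub for real_val].
HB.instance Definition _ := [Choice of real_of by <:].
HB.instance Definition _ := [SubChoice_isSubIntegralDomain of real_of by <:].
HB.instance Definition _ := [SubIntegralDomain_isSubField of real_of by <:].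

Let le_real (x y : real_of) := real_val x <= real_val y.
Let lt_real (x y : real_of) := real_val x < real_val y.
Let norm_real (x : real_of) := @RealOf `|real_val x| (normr_real _).

Let le0_add (x y : real_of) : le_real 0 x -> le_real 0 y -> le_real 0 (x + y).
Proof. exact: addr_ge0. Qed.
Let le0_mul (x y : real_of) : le_real 0 x -> le_real 0 y -> le_real 0 (x * y).
Proof. exact: mulr_ge0. Qed.
Let le0_anti (x : real_of) : le_real 0 x -> le_real x 0 -> x = 0.
Proof.
by move=> x_ge0 x_le0; apply: val_inj; apply/eqP; rewrite eq_le; apply/andP.
Qed.
Let sub_ge0 (x y : real_of) : le_real 0 (y - x) = le_real x y.
Proof. exact: subr_ge0. Qed.
Let le0_total (x : real_of) : le_real 0 x || le_real x 0.
Proof. exact: real_valP. Qed.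
Let normN (x : real_of) : norm_real (- x) = norm_real x.
Proof. by apply: val_inj; apply: normrN. Qed.
Let ge0_norm (x : real_of) : le_real 0 x -> norm_real x = x.
Proof. by move=> x_ge0; apply: val_inj; apply: ger0_norm. Qed.
Let lt_def (x y : real_of) : lt_real x y = (y != x) && le_real x y.
Proof. exact: lt_def. Qed.

HB.instance Definition _ := Num.IntegralDomain_isLeReal.Build real_of
  le0_add le0_mul le0_anti sub_ge0 le0_total normN ge0_norm lt_def.

End RealSubfield.

Arguments RealOf {C real_val}.

Section ComplexModuli.
Variable C : numClosedFieldType.
Implicit Types a b c z : C.

Let conjC_Re z : z^* = 2 * 'Re z - z.
Proof. by rewrite ReE; field; rewrite ?pnatr_eq0. Qed.

Lemma normC_add_scale_sqr a b z : a \is Num.real -> b \is Num.real ->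
  `|a + b * z| ^+ 2 = a ^+ 2 + 2 * a * b * 'Re z + b ^+ 2 * `|z| ^+ 2.
Proof.
move=> aR bR; rewrite !normCK rmorphD rmorphM /=.
by rewrite (conj_Creal aR) (conj_Creal bR) conjC_Re; ring.
Qed.

Lemma normC_quadratic_sqr a b c z :
  a \is Num.real -> b \is Num.real -> c \is Num.real ->
  `|a + b * z - c * z ^+ 2| ^+ 2 = (a + c * `|z| ^+ 2) ^+ 2 + b ^+ 2 * `|z| ^+ 2
    + 2 * b * (a - c * `|z| ^+ 2) * 'Re z - 4 * a * c * 'Re z ^+ 2.
Proof.
move=> aR bR cR.
rewrite !normCK rmorphB rmorphD !rmorphM /=.
by rewrite (conj_Creal aR) (conj_Creal bR) (conj_Creal cR) conjC_Re; ring.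
Qed.

End ComplexModuli.

Lemma lemma8_parameter_bounds {R : realFieldType} {p u : R} :
  4 / 3 <= p -> p ^+ 2 <= 2 -> u * (4 - p ^+ 2) = 6 * p ^+ 2 ->
  [/\ p <= 3 / 2, 24 / 5 <= u & u <= 6].
Proof. by move=> p_ge p_sqr_le u_def; split; nra. Qed.

(* The two endpoint inequalities of the affine estimate in [lemma8_real]:
   [|u + 2z| = u + 2r] at [z = r] and [|u + 2z| = u - 2r] at [z = -r]. *)
Lemma lemma8_bound_right {R : realFieldType} {p r u : R} :
  4 / 3 <= p -> p <= 3 / 2 -> 0 <= r -> r <= 1 -> 24 / 5 <= u -> u <= 6 ->
  8 * r + 4 * `|p * u / 2 - 5 * p / 2 * r - p / 2 * r ^+ 2|
    <= 5 * p * (p * u / 2 - p / 2 * r ^+ 2).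
Proof.
move=> p_ge p_le r_ge0 r_le1 u_ge u_le.
have r2_le : r ^+ 2 <= r by nra.
have pu_ge : 0 <= (p - 4 / 3) * (u - 24 / 5) by nra.
have pr_ge : 0 <= (p - 4 / 3) * r by nra.
have pr2_ge : 0 <= (3 / 2 - p) * r ^+ 2 by nra.
have [E_ge0 | E_lt0] := lerP 0 (p * u / 2 - 5 * p / 2 * r - p / 2 * r ^+ 2).
  by rewrite ger0_norm //; nra.
by rewrite ltr0_norm //; nra.
Qed.

Lemma lemma8_bound_left {R : realFieldType} {p r u : R} :
  4 / 3 <= p -> p <= 3 / 2 -> 0 <= r -> r <= 1 -> 24 / 5 <= u -> u <= 6 ->
  4 * u * `|p * u / 2 - 5 * p / 2 * r - p / 2 * r ^+ 2|
    <= (u - 2 * r) * (5 * p * (p * u / 2 - p / 2 * r ^+ 2)).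
Proof.
move=> p_ge p_le r_ge0 r_le1 u_ge u_le.
have r2_le : r ^+ 2 <= r by nra.
rewrite -subr_ge0.
have [E_ge0 | E_lt0] := lerP 0 (p * u / 2 - 5 * p / 2 * r - p / 2 * r ^+ 2).
  rewrite ger0_norm // (_ : _ - _ = 2 * ((p / 2 * (u - r ^+ 2))
    * (u * (5 * p / 2 - 2)) + (5 * p * r) * (u - p / 2 * (u - r ^+ 2))));
    last by field.
  by apply: mulr_ge0 => //; apply: addr_ge0; apply: mulr_ge0; nra.
rewrite ltr0_norm // (_ : _ - _ = 2 * p * (5 / 4 * ((p - 4 / 3)
    * ((u - 2 * r) * (u - r ^+ 2))) + 1 / 3 * (8 * u ^+ 2 - 8 * u * r ^+ 2
    - 25 * u * r + 10 * r ^+ 3))); last by field.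
have cubic_ge0 : 0 <= 8 * u ^+ 2 - 8 * u * r ^+ 2 - 25 * u * r + 10 * r ^+ 3.
  have r3_ge0 : 0 <= r ^+ 3 by apply: exprn_ge0.
  have ur2_le : u * r ^+ 2 <= u * r by nra.
  have ur_le : u * r <= u by nra.
  have u_quad_ge0 : 0 <= u * (8 * u - 33) by apply: mulr_ge0; lra.
  nra.
have factor_ge0 : 0 <= (p - 4 / 3) * ((u - 2 * r) * (u - r ^+ 2)).
  by apply: mulr_ge0; [lra | apply: mulr_ge0; nra].
apply: mulr_ge0; lra.
Qed.

Lemma lemma8_real (R : realFieldType) (p r x u n1 n2 : R) :
  4 / 3 <= p -> p ^+ 2 <= 2 -> 0 <= r -> r <= 1 -> - r <= x -> x <= r ->
  u * (4 - p ^+ 2) = 6 * p ^+ 2 ->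
  0 <= n1 -> n1 ^+ 2 = u ^+ 2 + 4 * u * x + 4 * r ^+ 2 ->
  0 <= n2 -> n2 ^+ 2 = (p * u / 2 + p / 2 * r ^+ 2) ^+ 2
    + (5 * p / 2) ^+ 2 * r ^+ 2
    + 2 * (5 * p / 2) * (p * u / 2 - p / 2 * r ^+ 2) * x
    - 4 * (p * u / 2) * (p / 2) * x ^+ 2 ->
  n1 - n2 <= (u - 2 * r) - `|p * u / 2 - 5 * p / 2 * r - p / 2 * r ^+ 2|.
Proof.
move=> p_ge p_sqr_le r_ge0 r_le1 x_ge x_le u_def n1_ge0 n1_sqr n2_ge0 n2_sqr.
have [p_le u_ge u_le] := lemma8_parameter_bounds p_ge p_sqr_le u_def.
have left_end := lemma8_bound_left p_ge p_le r_ge0 r_le1 u_ge u_le.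
have right_end := lemma8_bound_right p_ge p_le r_ge0 r_le1 u_ge u_le.
set E := p * u / 2 - _ - _ in left_end right_end *.
set q0 := 5 * p * _ in left_end right_end.
set q := q0 + 2 * p * (p * u / 2) * (r - x).
have q0_le_q : q0 <= q.
  by rewrite /q lerDl; apply: mulr_ge0; [apply: mulr_ge0|]; nra.
have n1_ge : u - 2 * r <= n1.
  rewrite -ler_sqr ?nnegrE //; last by lra.
  have : 0 <= 4 * u * (x + r) by apply: mulr_ge0; lra.
  by rewrite n1_sqr; nra.
have n1_le : n1 <= u + 2 * r.
  rewrite -ler_sqr ?nnegrE //; last by lra.
  have : 0 <= 4 * u * (r - x) by apply: mulr_ge0; lra.
  by rewrite n1_sqr; nra.
apply: (@sub_le_of_sqr_increments _ _ _ _ _ (x + r) (4 * u) q) => //; try lra.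
  by rewrite n2_sqr real_normK ?num_real // /q /q0 /E; field.
rewrite -subr_ge0.
have -> : q * (n1 + (u - 2 * r)) - 4 * u * (n1 - (u - 2 * r) + 2 * `|E|)
    = (q - 4 * u) * n1 + ((q + 4 * u) * (u - 2 * r) - 8 * u * `|E|) by ring.
apply: (affine_ge0_between n1_ge n1_le).
- have : (u - 2 * r) * q0 <= (u - 2 * r) * q by rewrite ler_wpM2l //; lra.
  lra.
- have : 0 <= 2 * u * (q - (8 * r + 4 * `|E|)) by apply: mulr_ge0; lra.
  lra.
Qed.

Lemma lemma8_Creal {C : numClosedFieldType} {p r x u n1 n2 : C} :
  p \is Num.real -> r \is Num.real -> x \is Num.real -> u \is Num.real ->
  n1 \is Num.real -> n2 \is Num.real ->
  4 / 3 <= p -> p ^+ 2 <= 2 -> 0 <= r -> r <= 1 -> - r <= x -> x <= r ->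
  u * (4 - p ^+ 2) = 6 * p ^+ 2 ->
  0 <= n1 -> n1 ^+ 2 = u ^+ 2 + 4 * u * x + 4 * r ^+ 2 ->
  0 <= n2 -> n2 ^+ 2 = (p * u / 2 + p / 2 * r ^+ 2) ^+ 2
    + (5 * p / 2) ^+ 2 * r ^+ 2
    + 2 * (5 * p / 2) * (p * u / 2 - p / 2 * r ^+ 2) * x
    - 4 * (p * u / 2) * (p / 2) * x ^+ 2 ->
  n1 - n2 <= (u - 2 * r) - `|p * u / 2 - 5 * p / 2 * r - p / 2 * r ^+ 2|.
Proof.
move=> pR rR xR uR n1R n2R p_ge p_sqr_le r_ge0 r_le1 x_ge x_le u_def
  n1_ge0 n1_sqr n2_ge0 n2_sqr.
refine (@lemma8_real (real_of C) (RealOf pR) (RealOf rR) (RealOf xR)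
  (RealOf uR) (RealOf n1R) (RealOf n2R) p_ge p_sqr_le r_ge0 r_le1 x_ge x_le
  _ n1_ge0 _ n2_ge0 _).
- by apply: val_inj; exact: u_def.
- by apply: val_inj; exact: n1_sqr.
- by apply: val_inj; exact: n2_sqr.
Qed.

Lemma a8E (C : numClosedFieldType) (p : C) : a8 p = p * u8 p / 2.
Proof.
rewrite /a8 /u8 (_ : 3 = 6 / 2 :> C); first by ring.
by field; rewrite ?pnatr_eq0.
Qed.

Lemma lemma8_parameters {C : numClosedFieldType} {p : C} :
  4 / 3 <= p -> p <= sqrtC 2 ->
  [/\ p \is Num.real, p ^+ 2 <= 2, u8 p * (4 - p ^+ 2) = 6 * p ^+ 2
    & u8 p \is Num.real].
Proof.
move=> p_ge p_le.
have p_ge0 : 0 <= p by apply: le_trans p_ge; rewrite divr_ge0 ?ler0n.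
have p_sqr_le : p ^+ 2 <= 2.
  by rewrite -[X in _ <= X](sqrtCK 2) ler_sqr ?nnegrE ?sqrtC_ge0 ?ler0n.
have den_gt0 : 0 < 4 - p ^+ 2.
  by rewrite subr_gt0 (le_lt_trans p_sqr_le) ?ltr_nat.
split=> //; first exact: ger0_real.
  by rewrite /u8 divfK ?lt0r_neq0.
by rewrite /u8 rpred_div ?rpredM ?rpred_nat ?ger0_real // ?ltW // exprn_ge0.
Qed.

Lemma normC_F8_quadratic_sqr {C : numClosedFieldType} {p : C} (z : C) :
  p \is Num.real -> u8 p \is Num.real ->
  `|a8 p + b8 p * z - c8 p * z ^+ 2| ^+ 2
    = (p * u8 p / 2 + p / 2 * `|z| ^+ 2) ^+ 2 + (5 * p / 2) ^+ 2 * `|z| ^+ 2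
      + 2 * (5 * p / 2) * (p * u8 p / 2 - p / 2 * `|z| ^+ 2) * 'Re z
      - 4 * (p * u8 p / 2) * (p / 2) * 'Re z ^+ 2.
Proof.
move=> pR uR; have half_real x : x \is Num.real -> x / 2 \is Num.real.
  by move=> xR; rewrite rpred_div ?rpred_nat.
rewrite normC_quadratic_sqr ?a8E.
- by rewrite /b8 /c8; field; rewrite ?pnatr_eq0.
- by apply/half_real/realM.
- by apply/half_real/realM; rewrite ?realn.
- exact: half_real.
Qed.

Lemma F8_neg_norm_ge {C : numClosedFieldType} {p : C} (z : C) :
  u8 p \is Num.real ->
  (u8 p - 2 * `|z|) - `|p * u8 p / 2 - 5 * p / 2 * `|z| - p / 2 * `|z| ^+ 2|
    <= F8 p (- `|z|).
Proof.
move=> uR; apply: lerB.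
  rewrite /v8 mulrN; apply: real_ler_norm; apply: realB => //.
  by apply: realM; [exact: realn | exact: normr_real].
suff -> : a8 p + b8 p * - `|z| - c8 p * (- `|z|) ^+ 2
    = p * u8 p / 2 - 5 * p / 2 * `|z| - p / 2 * `|z| ^+ 2 by [].
by rewrite a8E /b8 /c8; field; rewrite ?pnatr_eq0.
Qed.

Theorem lemma8 (C : numClosedFieldType) (p : C)
  (hp1 : 4 / 3 <= p) (hp2 : p <= sqrtC 2) (z : C) (hz : `|z| <= 1) :
  F8 p z <= F8 p (- `|z|).
Proof.
have [pR p_sqr_le u_def uR] := lemma8_parameters hp1 hp2.
have /andP[x_ge x_le] : - `|z| <= 'Re z <= `|z|.
  by rewrite -real_ler_norml ?Creal_Re // (leif_normC_Re_Creal z).1.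
have n1_sqr : `|u8 p + v8 C * z| ^+ 2
    = u8 p ^+ 2 + 4 * u8 p * 'Re z + 4 * `|z| ^+ 2.
  by rewrite /v8 normC_add_scale_sqr ?rpred_nat //; ring.
have := lemma8_Creal pR (normr_real z) (Creal_Re z) uR (normr_real _)
  (normr_real _) hp1 p_sqr_le (normr_ge0 z) hz x_ge x_le u_def
  (normr_ge0 _) n1_sqr (normr_ge0 _) (normC_F8_quadratic_sqr z pR uR).
by move=> /le_trans; apply; apply: F8_neg_norm_ge.
Qed.
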